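(* Let $q$ be odd. For every $c\in{\mathbb F}_q$, $$\prod\Big\{c-a: a\in{\mathbb F}_q,\ \left(\tfrac{a(a+4)}{q}\right)=1\Big\}+\prod\Big\{c-b: b\in{\mathbb F}_q,\ \left(\tfrac{b(b+4)}{q}\right)=-1\Big\}=\left(\frac{c}{q}\right).$$
   Context: $\left(\frac{a}{q}\right)$ denotes the Legendre symbol on ${\mathbb F}_q$: $1$ if $a$ is a nonzero square, $-1$ if a nonsquare, $0$ if $a=0$. Empty products equal $1$. *)

From HB Require Import structures.
From mathcomp Require Import all_boot all_order all_algebra all_field.
Set Implicit Arguments. Unset Strict Implicit. Unset Printing Implicit Defensive.
Import GRing.Theory.
Local Open Scope ring_scope.

Definition legendre (F : finFieldType) (a : F) : int :=
  if a == 0 then 0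
  else if [exists b : F, b ^+ 2 == a] then 1 else -1.

From HB Require Import structures.
From mathcomp Require Import all_boot all_order all_algebra all_field.
From mathcomp Require Import fingroup cyclic ring zify.
Set Implicit Arguments. Unset Strict Implicit. Unset Printing Implicit Defensive.
Import GRing.Theory.
Local Open Scope ring_scope.

(* Let q = #|F|, let S and N be the sets of a with a(a+4) a nonzero square,
   resp. a nonsquare, and k = #|S|.  The map u |-> u + u^-1 - 2 is two-to-one
   from F \ {0, 1, -1} onto S, the fibre over a being the two roots of
   X^2 - (a+2)X + 1.  Hence q = 2k + 3, and under the substitution
   X = (Y-1)^2/Y = Y + Y^-1 - 2 into F(Y) the polynomial P_S = prod_(a in S) (X - a)
   becomes Y^-k prod_(u <> 0, 1, -1) (Y - u) = Y^-k (Y^q - Y) / (Y (Y^2 - 1)).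
   Using (Y-1)^q = Y^q - 1 this gives P_S (X^(k+1) - P_S) X (X+4) = X^q - X, and
   the substitution is injective on F[X], so comparing with the factorisation
   X^q - X = P_S P_N X (X+4) yields P_N = X^(k+1) - P_S.  Evaluating at c gives
   P_S(c) + P_N(c) = c^((q-1)/2), the Legendre symbol of c by Euler's criterion. *)

Lemma big_fiber2 (R : Type) (idx : R) (op : Monoid.com_law idx)
    (T U : finType) (A : pred T) (B : pred U) (f : T -> U)
    (g : T -> R) (h : U -> R) :
  (forall x, A x -> B (f x)) ->
  (forall y, B y -> exists x1 x2, [/\ x1 != x2, op (g x1) (g x2) = h y &
     forall x, A x && (f x == y) = (x == x1) || (x == x2)]) ->
  \big[op/idx]_(x | A x) g x = \big[op/idx]_(y | B y) h y.
Proof.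
move=> fAB fiber; rewrite (partition_big f B) //=; apply: eq_bigr => y By.
have [x1 [x2 [x12 <- inFiber]]] := fiber y By.
rewrite (bigD1 x1) ?inFiber ?eqxx //= (bigD1 x2) ?inFiber ?eqxx ?orbT 1?eq_sym //=.
rewrite big1 ?Monoid.mulm1 // => x; rewrite inFiber.
by case: (x == x1); case: (x == x2).
Qed.

Lemma finField_two_neq0 (F : finFieldType) : odd #|F| -> (2 : F) != 0.
Proof.
move=> oddF; apply: contraTneq oddF => two0.
have o1_dvd2 : (#[1%R : F]%g %| 2)%N.
  by rewrite order_dvdn FinRing.zmodXgE FinRing.zmod1gE two0.
have o1_neq1 : #[1%R : F]%g != 1%N.
  by rewrite order_eq1 FinRing.zmod1gE oner_eq0.
have o1 : #[1%R : F]%g = 2%N by apply/prime_nt_dvdP.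
have := order_dvdG (in_setT (1%R : F)).
by rewrite o1 cardsT dvdn2 => ->.
Qed.

Section Legendre.
Variable F : finFieldType.

Lemma legendre_eq1 (x : F) :
  (legendre x == 1) = (x != 0) && [exists b : F, b ^+ 2 == x].
Proof. by rewrite /legendre; case: (x =P 0) => //= _; case: existsP. Qed.

Lemma legendre_eq0 (x : F) : (legendre x == 0) = (x == 0).
Proof. by rewrite /legendre; case: (x =P 0) => //= _; case: existsP. Qed.

Lemma legendre_sqr (x : F) : x != 0 -> legendre (x ^+ 2) = 1.
Proof.
move=> x0; apply/eqP; rewrite legendre_eq1 expf_eq0 (negbTE x0) /=.
by apply/existsP; exists x.
Qed.

Lemma legendre_cases (x : F) :
  [|| legendre x == 1, legendre x == -1 | legendre x == 0].
Proof. by rewrite /legendre; case: ifP => _ //; case: ifP. Qed.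

Lemma big_legendre_split (R : Type) (idx : R) (op : Monoid.com_law idx)
    (g : F -> F) (f : F -> R) :
  \big[op/idx]_(x : F) f x = op (op (\big[op/idx]_(x | legendre (g x) == 1) f x)
                                    (\big[op/idx]_(x | legendre (g x) == -1) f x))
                                (\big[op/idx]_(x | legendre (g x) == 0) f x).
Proof.
rewrite (bigID (fun x => legendre (g x) == 0)) Monoid.mulmC /=.
rewrite (bigID (fun x => legendre (g x) == 1)) /=.
by congr (op (op _ _) _); apply: eq_bigl => x;
  case/or3P: (legendre_cases (g x)) => /eqP->.
Qed.

End Legendre.

Section EulerCriterion.
Variables (F : finFieldType) (m : nat).
Hypothesis card_F : #|F| = (2 * m).+1.

Lemma expf_pred_card (x : F) : x != 0 -> x ^+ (2 * m) = 1.
Proof.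
move=> x0; apply: (mulIf x0); rewrite mul1r -exprSr -card_F.
exact: expf_card.
Qed.

Lemma card_legendre_eq1 : #|[pred x : F | legendre x == 1]| = m.
Proof.
have oddF : odd #|F| by rewrite card_F /= mul2n odd_double.
have : (\sum_(x : F | x != 0%R) 1 = \sum_(y : F | legendre y == 1%R) 2)%N.
  apply: (@big_fiber2 _ _ addn _ _ (predC1 0) (fun y => legendre y == 1)
    (fun x => x ^+ 2)) => [x /legendre_sqr -> //|y].
  rewrite legendre_eq1 => /andP[y0 /existsP[b /eqP yE]].
  have b0 : b != 0 by apply: contraNneq y0 => b0; rewrite -yE b0 expr0n.
  exists b, (- b); split=> // [|x].
    by rewrite -addr_eq0 -mulr2n -mulr_natl mulf_neq0 ?finField_two_neq0.
  rewrite -yE eqf_sqr /=; apply: andb_idl.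
  by case/orP=> /eqP->; rewrite ?oppr_eq0.
rewrite sum1dep_card sum_nat_cond_const !cardsE cardC1 card_F /= mulnC.
by move/eqP; rewrite eqn_mul2r /= eq_sym => /eqP.
Qed.

Lemma euler_criterion (c : F) : c ^+ m = (legendre c)%:~R.
Proof.
have m_gt0 : (0 < m)%N by have := finNzRing_gt1 F; rewrite card_F; lia.
have [->|c0] := eqVneq c 0; first by rewrite expr0n gtn_eqF // /legendre eqxx.
rewrite /legendre (negbTE c0); case: ifPn => [/existsP[b /eqP cE]|nsq].
  have b0 : b != 0 by apply: contraNneq c0 => b0; rewrite -cE b0 expr0n.
  by rewrite -cE -exprM expf_pred_card.
have : (c ^+ m) ^+ 2 = 1 by rewrite -exprM mulnC expf_pred_card.
move/eqP; rewrite sqrf_eq1 => /orP[/eqP cm1|/eqP //]; exfalso.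
pose p : {poly F} := 'X^m - 1%:P.
have p_neq0 : p != 0 by rewrite -size_poly_eq0 size_XnsubC.
have roots : all (root p) (c :: enum [pred x : F | legendre x == 1]).
  apply/allP => x; rewrite inE mem_enum => /predU1P[->|].
    by rewrite rootE !hornerE cm1 subrr.
  rewrite inE legendre_eq1 => /andP[x0 /existsP[b /eqP xE]].
  have b0 : b != 0 by apply: contraNneq x0 => b0; rewrite -xE b0 expr0n.
  by rewrite rootE !hornerE -xE -exprM expf_pred_card ?subrr.
have uniq_roots : uniq (c :: enum [pred x : F | legendre x == 1]).
  by rewrite /= enum_uniq mem_enum inE legendre_eq1 (negbTE nsq) andbF.
have := max_poly_roots p_neq0 roots uniq_roots.
by rewrite /= -cardE card_legendre_eq1 size_XnsubC ?ltnn.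
Qed.

End EulerCriterion.

Lemma joukowski_fiberP (F : fieldType) (a u w v : F) :
  u != w -> u + w = a + 2 -> u * w = 1 ->
  [&& v != 0, v ^+ 2 != 1 & v + v^-1 - 2 == a] = (v == u) || (v == w).
Proof.
move=> uw uwE uw1.
have sqr_neq1 (x y : F) : x * y = 1 -> x != y -> x ^+ 2 != 1.
  by move=> xy1; apply: contraNneq => x2; rewrite -[y]mul1r -x2 expr2 -mulrA xy1 mulr1.
have [->|v0] /= := eqVneq v 0.
  by apply/esym/norP; split; apply: contra_eq_neq (esym uw1) => <-;
    rewrite ?mul0r ?mulr0 oner_eq0.
have factor : (v - u) * (v - w) = (v + v^-1 - 2 - a) * v.
  have -> : (v - u) * (v - w) = v * v - (u + w) * v + u * w by ring.
  by rewrite uwE uw1; field.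
have -> : (v + v^-1 - 2 == a) = (v == u) || (v == w).
  have := mulf_eq0 (v + v^-1 - 2 - a) v.
  by rewrite -factor (negbTE v0) orbF mulf_eq0 !subr_eq0 => ->.
apply: andb_idl => /orP[]/eqP->; first exact: sqr_neq1 uw.
by apply: (sqr_neq1 _ u); rewrite 1?mulrC // eq_sym.
Qed.

Lemma legendre_joukowski (F : finFieldType) (u : F) :
  u != 0 -> u ^+ 2 != 1 -> legendre ((u + u^-1 - 2) * (u + u^-1 - 2 + 4)) = 1.
Proof.
move=> u0 u2; have -> : (u + u^-1 - 2) * (u + u^-1 - 2 + 4) = ((u ^+ 2 - 1) / u) ^+ 2.
  by field.
by rewrite legendre_sqr // mulf_neq0 ?invr_eq0 ?subr_eq0.
Qed.

Section Joukowski.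
Variable F : finFieldType.
Hypothesis oddF : odd #|F|.

Lemma joukowski_fiber (a : F) : legendre (a * (a + 4)) == 1 ->
  exists u w, [/\ u != w, u + w = a + 2, u * w = 1 &
    forall v, [&& v != 0, v ^+ 2 != 1 & v + v^-1 - 2 == a] = (v == u) || (v == w)].
Proof.
rewrite legendre_eq1 => /andP[a0 /existsP[s /eqP sE]].
have two0 := finField_two_neq0 oddF.
have s0 : s != 0 by apply: contraNneq a0 => s0; rewrite -sE s0 expr0n.
have uw : (a + 2 + s) / 2 != (a + 2 - s) / 2.
  rewrite -subr_eq0; have -> : (a + 2 + s) / 2 - (a + 2 - s) / 2 = s by field.
  exact: s0.
have uwE : (a + 2 + s) / 2 + (a + 2 - s) / 2 = a + 2 by field.
have uw1 : (a + 2 + s) / 2 * ((a + 2 - s) / 2) = 1.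
  apply: (mulIf (mulf_neq0 two0 two0)); rewrite mul1r.
  have -> : (a + 2 + s) / 2 * ((a + 2 - s) / 2) * (2 * 2) = (a + 2) ^+ 2 - s ^+ 2.
    by field.
  by rewrite sE; ring.
by exists ((a + 2 + s) / 2), ((a + 2 - s) / 2); split=> // v; apply: joukowski_fiberP.
Qed.

Lemma big_joukowski (R : Type) (idx : R) (op : Monoid.com_law idx) (g h : F -> R) :
  (forall a u w, u + w = a + 2 -> u * w = 1 -> op (g u) (g w) = h a) ->
  \big[op/idx]_(u | (u != 0) && (u ^+ 2 != 1)) g u
  = \big[op/idx]_(a | legendre (a * (a + 4)) == 1) h a.
Proof.
move=> gh; apply: (@big_fiber2 _ _ op _ _ (fun u => (u != 0) && (u ^+ 2 != 1))
    (fun a => legendre (a * (a + 4)) == 1) (fun u => u + u^-1 - 2)).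
  by move=> u /andP[u0 u2]; rewrite legendre_joukowski.
move=> a; case/joukowski_fiber=> u [w [uw uwE uw1 fiberE]].
by exists u, w; split=> [||v]; [|exact: gh|rewrite -andbA].
Qed.

Lemma prod_joukowski :
  \prod_(u : F | (u != 0) && (u ^+ 2 != 1)) ('X - u%:P)
  = \prod_(a : F | legendre (a * (a + 4)) == 1) ('X^2 - (a + 2)%:P * 'X + 1).
Proof.
apply: big_joukowski => a u w uwE uw1.
by rewrite /= -polyC1 -uwE -uw1 polyCD polyCM; ring.
Qed.

Lemma card_joukowski :
  #|[pred u : F | (u != 0) && (u ^+ 2 != 1)]|
  = #|[pred a : F | legendre (a * (a + 4)) == 1]|.*2.
Proof. by rewrite -muln2 -sum_nat_const -sum1_card; apply: big_joukowski. Qed.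

End Joukowski.

Lemma finField_XsubC1_exp_card (F : finFieldType) :
  ('X - 1) ^+ #|F| = 'X^#|F| - 1 :> {poly F}.
Proof.
have := congr1 (comp_poly ('X - 1)) (finField_genPoly F).
rewrite rmorphB rmorphXn /= comp_polyX rmorph_prod /=.
rewrite (eq_bigr (fun x => 'X - (x + 1)%:P)) => [|x _]; last first.
  by rewrite comp_polyB comp_polyX comp_polyC polyCD; ring.
have -> : \prod_x ('X - (x + 1)%:P) = \prod_x ('X - x%:P) :> {poly F}.
  by rewrite [RHS](reindex_inj (addIr (1 : F))).
rewrite -finField_genPoly => /(canRL (subrK _)) ->.
ring.
Qed.

Section ThreeRoots.
Variable F : finFieldType.
Hypothesis oddF : odd #|F|.

Let sign_sep : [/\ (1 : F) != 0, (-1 : F) != 0 & (-1 : F) != 1].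
Proof.
rewrite oppr_eq0 oner_eq0 -subr_eq0 -opprD oppr_eq0.
by split=> //; exact: finField_two_neq0.
Qed.

Let split_signs (R : Type) (idx : R) (op : Monoid.com_law idx) (f : F -> R) :
  \big[op/idx]_(x : F) f x
  = op (f 0) (op (f 1) (op (f (-1)) (\big[op/idx]_(x | (x != 0) && (x ^+ 2 != 1)) f x))).
Proof.
have [n1 nm1 m1] := sign_sep.
rewrite (bigD1 0) // (bigD1 1) ?n1 // (bigD1 (-1)) /= ?nm1 ?m1 //.
by congr (op _ (op _ (op _ _))); apply: eq_bigl => x; rewrite sqrf_eq1 negb_or -!andbA.
Qed.

Lemma finField_genPoly_split :
  'X^#|F| - 'X
  = \prod_(u : F | (u != 0) && (u ^+ 2 != 1)) ('X - u%:P) * ('X * ('X^2 - 1)).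
Proof. by rewrite finField_genPoly split_signs /= polyCN subr0 polyC1; ring. Qed.

Lemma card_split_signs :
  #|F| = #|[pred u : F | (u != 0) && (u ^+ 2 != 1)]|.+3.
Proof. by rewrite -!sum1_card split_signs /= !add1n. Qed.

End ThreeRoots.

Section JoukowskiSubstitution.
Context {F : fieldType}.
Local Notation K := {fraction {poly F}}.

Definition fracX : K := tofrac 'X.
Definition joukowski_frac : K := (fracX - 1) ^+ 2 / fracX.
Definition joukowski_eval : {rmorphism {poly F} -> K} :=
  horner_eval joukowski_frac \o map_poly ((@tofrac _) \o polyC).

Lemma joukowski_evalE p :
  joukowski_eval p = (map_poly ((@tofrac _) \o polyC) p).[joukowski_frac].
Proof. by []. Qed.

Lemma fracX_neq0 : fracX != 0.
Proof. by rewrite tofrac_eq0 polyX_eq0. Qed.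

Lemma fracX_sub1_neq0 : fracX - 1 != 0.
Proof. by rewrite -tofrac1 -tofracB tofrac_eq0 -polyC1 polyXsubC_eq0. Qed.

Lemma joukowski_evalX : joukowski_eval 'X = joukowski_frac.
Proof. by rewrite joukowski_evalE map_polyX hornerX. Qed.

Lemma joukowski_evalC c : joukowski_eval c%:P = tofrac c%:P.
Proof. by rewrite joukowski_evalE map_polyC hornerC. Qed.

Lemma joukowski_eval_XsubC c :
  joukowski_eval ('X - c%:P) = joukowski_frac - tofrac c%:P.
Proof. by rewrite rmorphB joukowski_evalX joukowski_evalC. Qed.

Definition jouk_hom (p : {poly F}) : {poly F} :=
  \sum_(i < size p) p`_i *: (('X - 1) ^+ (2 * i) * 'X ^+ ((size p).-1 - i)).

Lemma tofrac_jouk_hom p :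
  tofrac (jouk_hom p) = fracX ^+ (size p).-1 * joukowski_eval p.
Proof.
rewrite joukowski_evalE horner_coef size_map_poly rmorph_sum mulr_sumr.
apply: eq_bigr => i _.
rewrite coef_map -mul_polyC !rmorphM !rmorphXn rmorphB rmorph1 /= [RHS]mulrCA.
have le_i : (i <= (size p).-1)%N by rewrite -ltnS (ltn_predK (ltn_ord i)).
congr (_ * _); rewrite -[in RHS](subnK le_i) exprD /joukowski_frac expr_div_n -exprM.
by rewrite -mulrA [fracX ^+ i * _]mulrCA mulfV ?expf_neq0 ?fracX_neq0 // mulr1 mulrC.
Qed.

Lemma size_jouk_hom p : p != 0 -> size (jouk_hom p) = (2 * (size p).-1).+1.
Proof.
move=> p0; have [d sp] : exists d, size p = d.+1.
  by exists (size p).-1; rewrite prednK // size_poly_gt0.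
have lead0 : p`_d != 0 by rewrite -[d]/(d.+1.-1) -sp -lead_coefE lead_coef_eq0.
rewrite /jouk_hom sp big_ord_recr /= subnn expr0 mulr1 addrC size_polyDl.
  by rewrite size_scale // -polyC1 size_exp_XsubC.
rewrite size_scale // -polyC1 size_exp_XsubC ltnS.
apply: (leq_trans (size_sum _ _ _)); apply/bigmax_leqP => i _.
apply: (leq_trans (size_scale_leq _ _)); apply: (leq_trans (size_polyMleq _ _)).
rewrite size_exp_XsubC size_polyXn; have := ltn_ord i; lia.
Qed.

Lemma joukowski_eval_inj : injective joukowski_eval.
Proof.
apply: raddf_inj => p evp0; apply/eqP; apply: contraTT isT => p0.
have : jouk_hom p != 0 by rewrite -size_poly_eq0 size_jouk_hom.
by rewrite -tofrac_eq0 tofrac_jouk_hom evp0 mulr0 eqxx.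
Qed.

End JoukowskiSubstitution.

Lemma joukowski_identity (K : fieldType) (Y Q : K) (k : nat) :
  Y != 0 -> Y - 1 != 0 ->
  Y ^+ (2 * k.+1).+1 - Y = Q * (Y * (Y ^+ 2 - 1)) ->
  (Y - 1) ^+ (2 * k.+1).+1 = Y ^+ (2 * k.+1).+1 - 1 ->
  let t := (Y - 1) ^+ 2 / Y in
  t ^+ (2 * k.+1).+1 - t = Q / Y ^+ k * (t ^+ k.+1 - Q / Y ^+ k) * (t * (t + 4)).
Proof.
move=> Y0 Y1 Yq Y1q t; set a := Y ^+ k.+1; set b := (Y - 1) ^+ k.+1.
have expq (Z : K) : Z ^+ (2 * k.+1).+1 = Z * (Z ^+ k.+1) ^+ 2.
  by rewrite -exprM mulnC -exprS.
rewrite !expq -/a -/b in Yq Y1q *.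
have a0 : a != 0 by rewrite expf_neq0.
have Yk : Y ^+ k = a / Y by rewrite /a exprS mulrC mulKf.
have tk : t ^+ k.+1 = b ^+ 2 / a by rewrite /t /a /b expr_div_n -!exprM mulnC.
rewrite tk Yk.
have a2 : a ^+ 2 = Q * (Y ^+ 2 - 1) + 1.
  by apply: (mulfI Y0); move/eqP: Yq; rewrite subr_eq => /eqP ->; ring.
have b2 : b ^+ 2 = Q * Y * (Y + 1) + 1.
  by apply: (mulfI Y1); rewrite Y1q a2; ring.
rewrite /t; field: a2 b2.
by rewrite a0 Y0.
Qed.

Lemma joukowski_sub (K : fieldType) (Y x : K) : Y != 0 ->
  (Y - 1) ^+ 2 / Y - x = (Y ^+ 2 - (x + 2) * Y + 1) / Y.
Proof. by move=> Y0; field. Qed.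

Section Corollary.
Variable F : finFieldType.
Hypothesis oddF : odd #|F|.

Local Notation k := #|[pred a : F | legendre (a * (a + 4)) == 1]|.
Local Notation PS := (\prod_(a : F | legendre (a * (a + 4)) == 1) ('X - a%:P)).
Local Notation PN := (\prod_(b : F | legendre (b * (b + 4)) == -1) ('X - b%:P)).
Local Notation Q := (\prod_(u : F | (u != 0) && (u ^+ 2 != 1)) ('X - u%:P)).

Lemma card_F_legendre : #|F| = (2 * k.+1).+1.
Proof. by rewrite card_split_signs // card_joukowski // -mul2n mulnS. Qed.

Lemma finField_genPoly_legendre : 'X^#|F| - 'X = PS * PN * ('X * ('X + 4)).
Proof.
rewrite finField_genPoly (big_legendre_split _ (fun x => x * (x + 4))); congr (_ * _).
have zE (z : F) : (legendre (z * (z + 4)) == 0) = (z == 0) || (z == -4).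
  by rewrite legendre_eq0 mulf_eq0 addr_eq0.
have four0 : (-4 : F) != 0.
  by rewrite oppr_eq0 (_ : 4 = 2 * 2) ?mulf_neq0 ?finField_two_neq0 // -natrM.
rewrite (bigD1 0) ?zE ?eqxx // (bigD1 (-4)) /=; last by rewrite zE eqxx orbT four0.
rewrite big1 => [|z]; last by rewrite zE; case: (z == 0); case: (z == -4).
by rewrite mulr1 subr0 polyCN opprK polyC_natr.
Qed.

Lemma joukowski_eval_PS : joukowski_eval PS = tofrac Q / fracX ^+ k.
Proof.
rewrite rmorph_prod prod_joukowski // rmorph_prod -prodr_const -prodf_div.
apply: eq_bigr => a _; rewrite joukowski_eval_XsubC /joukowski_frac.
rewrite -[X in _ = X / _]/(tofrac ('X^2 - (a + 2)%:P * 'X + 1)).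
rewrite tofracD tofracB tofrac1 !tofracM polyCD tofracD polyC_natr tofracMn tofrac1.
exact: (joukowski_sub (tofrac a%:P) (@fracX_neq0 F)).
Qed.

Lemma prod_legendre_eqN1 : PN = 'X ^+ k.+1 - PS.
Proof.
have PS0 : PS != 0 by rewrite monic_neq0 ?monic_prod_XsubC.
have PZ0 : 'X * ('X + 4) != 0 :> {poly F}.
  by rewrite mulf_neq0 ?polyX_eq0 // -polyC_natr -size_poly_eq0 size_XaddC.
apply: (mulfI PS0); apply: (mulIf PZ0); rewrite -finField_genPoly_legendre.
apply: joukowski_eval_inj; rewrite !rmorphM !rmorphB !rmorphXn rmorphD rmorph_nat.
rewrite joukowski_evalX joukowski_eval_PS card_F_legendre /joukowski_frac.
refine (joukowski_identity fracX_neq0 fracX_sub1_neq0 _ _).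
- have := congr1 (@tofrac _) (finField_genPoly_split oddF).
  by rewrite card_F_legendre tofracB tofracXn 2!tofracM tofracB tofracXn tofrac1.
- have := congr1 (@tofrac _) (finField_XsubC1_exp_card F).
  by rewrite card_F_legendre !(tofracB, tofracXn, tofrac1).
Qed.

End Corollary.

Theorem corollary7p5 (F : finFieldType) (hodd : odd #|F|) (c : F) :
  \prod_(a : F | legendre (a * (a + 4)) == 1) (c - a)
  + \prod_(b : F | legendre (b * (b + 4)) == -1) (c - b)
  = (legendre c)%:~R.
Proof.
have horner_prodXsubC (P : pred F) :
    (\prod_(a | P a) ('X - a%:P)).[c] = \prod_(a | P a) (c - a).
  by rewrite horner_prod; apply: eq_bigr => a _; rewrite hornerXsubC.
rewrite -(horner_prodXsubC (fun a => legendre (a * (a + 4)) == 1)).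
rewrite -(horner_prodXsubC (fun b => legendre (b * (b + 4)) == -1)).
rewrite prod_legendre_eqN1 // hornerD hornerN hornerXn addrC subrK.
exact: (euler_criterion (card_F_legendre hodd) c).
Qed.
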